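(* Let $H(p,x,\omega)$ be quasiconcave satisfying (A1)–(A3), with effective Hamiltonian $\overline H$. Fix $p_0\in\mathbb R^d$. Then there is an event $\widetilde\Omega\subseteq\Omega$ with $\mathbb P[\widetilde\Omega]=1$ such that for every $(\epsilon,R,\omega)\in(0,1)\times(0,\infty)\times\widetilde\Omega$ there is $\lambda_0=\lambda_0(p_0,\epsilon,R,\omega)>0$ such that for all $0<\lambda<\lambda_0$ and all $x\in B_{R/\lambda}(0)$, $$p_0+D^+v_\lambda(x,p_0,\omega)\subseteq\{q\in\mathbb R^d:H(q,x,\omega)>\overline H(p_0)-\epsilon\},$$ where $v_\lambda(x,p_0,\omega)$ is the unique viscosity solution of $\lambda v_\lambda+H(p_0+Dv_\lambda,x,\omega)=0$ in $\mathbb R^d$.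
   Context: Setting: $(\Omega,\mathcal F,\mathbb P)$ is a probability space with an ergodic group $\{\tau_x\}_{x\in\mathbb R^d}$ of measure-preserving maps ($\tau_{y+z}=\tau_y\circ\tau_z$). (A1) $H(p,y,\tau_z\omega)=H(p,y+z,\omega)$; (A2) $\liminf_{|p|\to\infty}\operatorname{ess\,inf}_{(x,\omega)}|H(p,x,\omega)|=\infty$; (A3) for each $\omega$ and compact $K$ there is a modulus $\rho$ with $|H(p,x,\omega)-H(q,y,\omega)|\le\rho(|p-q|+|x-y|)$ for $p,q\in K$, $x,y\in\mathbb R^d$, and $H$ bounded on $K\times\mathbb R^d\times\Omega$. Quasiconcave: for each $(x,\omega)$, $p\mapsto H(p,x,\omega)$ has convex superlevel sets $\{H\ge c\}$. A quasiconcave $H$ satisfying (A1)–(A3) is (by known results) regularly homogenizable at every $p$: there is $\overline H(p)$ with $\mathbb P[\limsup_{\lambda\to0}\max_{|x|\le R/\lambda}|\lambda v_\lambda(x,p,\omega)+\overline H(p)|=0\ \forall R>0]=1$; $\overline H$ is the effective Hamiltonian. For continuous $f$, $D^+f(x_0)=\{p:\limsup_{x\to x_0}\frac{f(x)-f(x_0)-p\cdot(x-x_0)}{|x-x_0|}\le0\}$. *)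

From mathcomp Require Import all_boot.
From Stdlib Require Import Reals.


Unset Printing Implicit Defensive.
Local Open Scope R_scope.

Definition vec (d : nat) := 'I_d -> R.
Definition vadd {d} (p q : vec d) : vec d := fun i => p i + q i.
Definition vsub {d} (p q : vec d) : vec d := fun i => p i - q i.
Definition vscale {d} (t : R) (p : vec d) : vec d := fun i => t * p i.
Definition vzero {d} : vec d := fun _ => 0.
Definition dot {d} (p q : vec d) : R := \big[Rplus/0]_(i < d) (p i * q i).
Definition vnorm {d} (p : vec d) : R := sqrt (dot p p).

Definition sigma_algebra {Omega : Type} (F : (Omega -> Prop) -> Prop) : Prop :=
  F (fun _ => True) /\
  (forall A, F A -> F (fun w => ~ A w)) /\
  (forall A : nat -> Omega -> Prop, (forall n, F (A n)) -> F (fun w => exists n, A n w)).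

Definition probability {Omega : Type} (F : (Omega -> Prop) -> Prop)
  (P : (Omega -> Prop) -> R) : Prop :=
  sigma_algebra F /\
  (forall A, F A -> 0 <= P A) /\
  P (fun _ => True) = 1 /\
  (forall A : nat -> Omega -> Prop,
     (forall n, F (A n)) ->
     (forall n m w, n <> m -> A n w -> A m w -> False) ->
     infinite_sum (fun n => P (A n)) (P (fun w => exists n, A n w))).

Definition almost_surely {Omega : Type} (F : (Omega -> Prop) -> Prop)
  (P : (Omega -> Prop) -> R) (Q : Omega -> Prop) : Prop :=
  exists E, F E /\ P E = 1 /\ forall w, E w -> Q w.

Definition ergodic_group {d : nat} {Omega : Type} (F : (Omega -> Prop) -> Prop)
  (P : (Omega -> Prop) -> R) (tau : vec d -> Omega -> Omega) : Prop :=
  (forall w, tau vzero w = w) /\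
  (forall y z w, tau (vadd y z) w = tau y (tau z w)) /\
  (forall x A, F A -> F (fun w => A (tau x w)) /\ P (fun w => A (tau x w)) = P A) /\
  (forall A, F A -> (forall x w, A (tau x w) <-> A w) -> P A = 0 \/ P A = 1).

Definition hypA1 {d} {Omega : Type} (tau : vec d -> Omega -> Omega)
  (H : vec d -> vec d -> Omega -> R) : Prop :=
  forall p y z w, H p y (tau z w) = H p (vadd y z) w.

(* liminf_{|p|->oo} essinf_{(x,w)} |H(p,x,w)| = oo *)
Definition hypA2 {d} {Omega : Type} (F : (Omega -> Prop) -> Prop)
  (P : (Omega -> Prop) -> R) (H : vec d -> vec d -> Omega -> R) : Prop :=
  forall M : R, exists r : R, forall p, r <= vnorm p ->
    almost_surely F P (fun w => forall x, M <= Rabs (H p x w)).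

Definition modulus (rho : R -> R) : Prop :=
  forall eta, 0 < eta -> exists delta, 0 < delta /\
    forall r, 0 <= r -> r < delta -> Rabs (rho r) < eta.

(* compact sets K are represented by closed balls (every compact set lies in one,
   and closed balls are compact) *)
Definition hypA3 {d} {Omega : Type} (H : vec d -> vec d -> Omega -> R) : Prop :=
  (forall (w : Omega) (r : R), exists rho, modulus rho /\
     forall p q x y, vnorm p <= r -> vnorm q <= r ->
       Rabs (H p x w - H q y w) <= rho (vnorm (vsub p q) + vnorm (vsub x y))) /\
  (forall r : R, exists C, forall p x w, vnorm p <= r -> Rabs (H p x w) <= C).

Definition quasiconcave {d} {Omega : Type} (H : vec d -> vec d -> Omega -> R) : Prop :=
  forall x w c p q t, 0 <= t <= 1 -> c <= H p x w -> c <= H q x w ->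
    c <= H (vadd (vscale t p) (vscale (1 - t) q)) x w.

Definition superdiff {d} (f : vec d -> R) (x0 p : vec d) : Prop :=
  forall eta, 0 < eta -> exists delta, 0 < delta /\
    forall x, 0 < vnorm (vsub x x0) < delta ->
      f x - f x0 - dot p (vsub x x0) <= eta * vnorm (vsub x x0).

Definition subdiff {d} (f : vec d -> R) (x0 p : vec d) : Prop :=
  forall eta, 0 < eta -> exists delta, 0 < delta /\
    forall x, 0 < vnorm (vsub x x0) < delta ->
      f x - f x0 - dot p (vsub x x0) >= - eta * vnorm (vsub x x0).

Definition continuous_vec {d} (f : vec d -> R) : Prop :=
  forall x eta, 0 < eta -> exists delta, 0 < delta /\
    forall y, vnorm (vsub y x) < delta -> Rabs (f y - f x) < eta.

Definition viscosity_solution {d} {Omega : Type} (H : vec d -> vec d -> Omega -> R)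
  (lam : R) (p : vec d) (w : Omega) (v : vec d -> R) : Prop :=
  continuous_vec v /\
  (forall x q, superdiff v x q -> lam * v x + H (vadd p q) x w <= 0) /\
  (forall x q, subdiff v x q -> lam * v x + H (vadd p q) x w >= 0).

(* the class in which the solution is unique (comparison principle) *)
Definition bounded_unif_continuous {d} (f : vec d -> R) : Prop :=
  (exists C, forall x, Rabs (f x) <= C) /\
  (forall eta, 0 < eta -> exists delta, 0 < delta /\
    forall x y, vnorm (vsub y x) < delta -> Rabs (f y - f x) < eta).

Definition is_vlam {d} {Omega : Type} (H : vec d -> vec d -> Omega -> R)
  (v : R -> vec d -> vec d -> Omega -> R) : Prop :=
  forall lam p w, 0 < lam ->
    viscosity_solution H lam p w (fun x => v lam p x w) /\
    bounded_unif_continuous (fun x => v lam p x w).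

Definition effective_hamiltonian {d} {Omega : Type} (F : (Omega -> Prop) -> Prop)
  (P : (Omega -> Prop) -> R) (v : R -> vec d -> vec d -> Omega -> R)
  (Hbar : vec d -> R) : Prop :=
  forall p, almost_surely F P (fun w =>
    forall Rr, 0 < Rr -> forall eta, 0 < eta -> exists lam1, 0 < lam1 /\
      forall lam x, 0 < lam -> lam < lam1 -> vnorm x <= Rr / lam ->
        Rabs (lam * v lam p x w + Hbar p) <= eta).

(* Almost surely, homogenization holds at p0 and H(., ., w) is coercive uniformly in x: (A2) gives
   this on a countable dense set of momenta and the continuity (A3) extends it.  For such w, small
   lam and |x| < R / lam, the supersolution property together with homogenization give
   H(p0 + z, y, w) >= - lam v_lam(y) > Hbar(p0) - eps/2 for every subdifferential z of v_lam at any y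
   with |y - x| < 1.  The lower bound then passes to superdifferentials q at x.  Otherwise p0 + q can
   be separated by a unit vector e from the superlevel set {H(., x, w) >= c} (convex by
   quasiconcavity), and a test function tilted along e produces, next to x, a subdifferential whose
   slope along e is below the separating level.  Every subdifferential near x is however in that
   superlevel set, or far away; far momenta are excluded by coercivity and quasiconcavity in
   dimension at least two (a superlevel set through a far point would contain its opposite, hence
   0), and in dimension one their radial projection still yields points of the superlevel set on
   the wrong side of the separating hyperplane. *)

From HB Require Import structures.
From mathcomp Require Import all_boot.
From Stdlib Require Import Reals Lra Lia Psatz ZArith.
From Stdlib Require Import FunctionalExtensionality PropExtensionality Classical ClassicalEpsilon.
Local Open Scope R_scope.

HB.instance Definition _ := Monoid.isComLaw.Build R 0 Rplus
  (fun a b c => esym (Rplus_assoc a b c)) Rplus_comm Rplus_0_l.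

Lemma vext d (p q : vec d) : (forall i, p i = q i) -> p = q.
Proof. by move=> h; apply: functional_extensionality. Qed.

Ltac vring := apply: vext => ?; rewrite /vadd /vsub /vscale /vzero; first [ring | field].

(** * Vectors in R^d *)

Section Vectors.
Context {d : nat}.
Implicit Types p q r : vec d.

Lemma sumR_scale (t : R) (F : 'I_d -> R) :
  \big[Rplus/0]_(i < d) (t * F i) = t * \big[Rplus/0]_(i < d) F i.
Proof. by elim/big_rec2: _ => [|i a b _ ->]; ring. Qed.

(* big_split with Rplus explicit, so that ring sees through the resulting sums. *)
Lemma sumRD (F G : 'I_d -> R) :
  \big[Rplus/0]_(i < d) (F i + G i) = \big[Rplus/0]_(i < d) F i + \big[Rplus/0]_(i < d) G i.
Proof. exact: big_split. Qed.

Lemma sumR_ge0 (F : 'I_d -> R) : (forall i, 0 <= F i) -> 0 <= \big[Rplus/0]_(i < d) F i.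
Proof. by move=> h; elim/big_rec: _ => [|i a _ ha]; [lra | have := h i; lra]. Qed.

Lemma sumR_le (F G : 'I_d -> R) : (forall i, F i <= G i) ->
  \big[Rplus/0]_(i < d) F i <= \big[Rplus/0]_(i < d) G i.
Proof. by move=> h; elim/big_rec2: _ => [|i a b _ hab]; [lra | have := h i; lra]. Qed.

Lemma sumR_const (c : R) : \big[Rplus/0]_(i < d) c = INR d * c.
Proof.
rewrite big_const_ord; elim: d => [|n IH]; first by rewrite /=; lra.
by rewrite iterS IH S_INR; lra.
Qed.

Lemma sumR_term_le (F : 'I_d -> R) j : (forall i, 0 <= F i) ->
  F j <= \big[Rplus/0]_(i < d) F i.
Proof.
move=> h; rewrite (bigD1 j) //=.
have : 0 <= \big[Rplus/0]_(i < d | i != j) F i.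
  by elim/big_rec: _ => [|i a _ ha]; [lra | have := h i; lra].
by move=> ?; rewrite -{1}(Rplus_0_r (F j)); apply: Rplus_le_compat_l.
Qed.

Lemma dotC p q : dot p q = dot q p.
Proof. by apply: eq_bigr => i _; rewrite Rmult_comm. Qed.

Lemma dotDl p q r : dot (vadd p q) r = dot p r + dot q r.
Proof. by rewrite /dot -sumRD; apply: eq_bigr => i _; rewrite /vadd; ring. Qed.

Lemma dotZl t p q : dot (vscale t p) q = t * dot p q.
Proof. by rewrite /dot -sumR_scale; apply: eq_bigr => i _; rewrite /vscale; ring. Qed.

Lemma dotBl p q r : dot (vsub p q) r = dot p r - dot q r.
Proof.
have -> : vsub p q = vadd p (vscale (-1) q) by vring.
by rewrite dotDl dotZl; ring.
Qed.

Lemma dotDr p q r : dot r (vadd p q) = dot r p + dot r q.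
Proof. by rewrite dotC dotDl !(dotC r). Qed.

Lemma dotBr p q r : dot r (vsub p q) = dot r p - dot r q.
Proof. by rewrite dotC dotBl !(dotC r). Qed.

Lemma dotZr t p q : dot q (vscale t p) = t * dot q p.
Proof. by rewrite dotC dotZl dotC. Qed.

Lemma dot0l p : dot vzero p = 0.
Proof. by rewrite (_ : vzero = vscale 0 vzero) ?dotZl ?Rmult_0_l //; vring. Qed.

Lemma dot_ge0 p : 0 <= dot p p.
Proof. by apply: sumR_ge0 => i; nra. Qed.

Lemma dotDD p q : dot (vadd p q) (vadd p q) = dot p p + 2 * dot p q + dot q q.
Proof. by rewrite !dotDl !dotDr (dotC q p); ring. Qed.

Lemma vnorm_ge0 p : 0 <= vnorm p.
Proof. exact: sqrt_pos. Qed.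

Lemma vnorm_sqr p : vnorm p * vnorm p = dot p p.
Proof. exact/sqrt_sqrt/dot_ge0. Qed.

Lemma vnorm_le a p : 0 <= a -> dot p p <= a * a -> vnorm p <= a.
Proof. by move=> a0 h; rewrite -(sqrt_square a) //; apply: sqrt_le_1_alt. Qed.

Lemma vnorm_ge a p : 0 <= a -> a * a <= dot p p -> a <= vnorm p.
Proof. by move=> a0 h; rewrite -(sqrt_square a) //; apply: sqrt_le_1_alt. Qed.

Lemma vnorm0 : vnorm (@vzero d) = 0.
Proof. by rewrite /vnorm dot0l sqrt_0. Qed.

Lemma coord_le_vnorm p i : Rabs (p i) <= vnorm p.
Proof.
apply: vnorm_ge; first exact: Rabs_pos.
rewrite -Rabs_mult Rabs_right; last nra.
by apply: (sumR_term_le (fun i => p i * p i)) => j; nra.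
Qed.

Lemma vnorm_eq0 p : vnorm p = 0 -> p = vzero.
Proof.
move=> h; apply: vext => i; have := coord_le_vnorm p i; rewrite h /vzero.
by have := Rabs_pos (p i); split_Rabs; lra.
Qed.

Lemma vnorm_le_coord (a : R) p : 0 <= a -> (forall i, Rabs (p i) <= a) ->
  vnorm p <= (INR d + 1) * a.
Proof.
move=> a0 h; apply: vnorm_le; first by have := pos_INR d; nra.
apply: Rle_trans (_ : \big[Rplus/0]_(i < d) (a * a) <= _).
  by apply: sumR_le => i; have := h i; split_Rabs; nra.
by rewrite sumR_const; have := pos_INR d; nra.
Qed.

Lemma dot_sqr_le p q : dot p q * dot p q <= dot p p * dot q q.
Proof.
have [q0 | qpos] : dot q q = 0 \/ 0 < dot q q by have := dot_ge0 q; lra.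
  have -> : q = vzero by apply: vnorm_eq0; rewrite /vnorm q0 sqrt_0.
  by rewrite (dotC p) !dot0l; nra.
set t := dot p q / dot q q.
have := dot_ge0 (vsub p (vscale t q)).
rewrite !dotBl !dotBr !dotZl !dotZr (dotC q p).
have -> : dot p p - t * dot p q - (t * dot p q - t * (t * dot q q)) =
  (dot p p * dot q q - dot p q * dot p q) / dot q q by rewrite /t; field; lra.
move=> h; have := Rmult_le_pos _ _ h (Rlt_le _ _ qpos).
by rewrite /Rdiv Rmult_assoc Rinv_l; lra.
Qed.

Lemma cauchy_schwarz p q : Rabs (dot p q) <= vnorm p * vnorm q.
Proof.
rewrite /vnorm -sqrt_mult_alt; last exact: dot_ge0.
rewrite -sqrt_Rsqr_abs; apply: sqrt_le_1_alt; rewrite /Rsqr; apply: dot_sqr_le.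
Qed.

Lemma vnormD_le p q : vnorm (vadd p q) <= vnorm p + vnorm q.
Proof.
apply: vnorm_le; first by have := vnorm_ge0 p; have := vnorm_ge0 q; lra.
rewrite dotDD -!vnorm_sqr.
by have := Rle_trans _ _ _ (Rle_abs _) (cauchy_schwarz p q); nra.
Qed.

Lemma vnormZ t p : vnorm (vscale t p) = Rabs t * vnorm p.
Proof.
rewrite /vnorm dotZl dotZr -Rmult_assoc sqrt_mult_alt; last nra.
by rewrite -(sqrt_Rsqr_abs t).
Qed.

Lemma vnormBC p q : vnorm (vsub p q) = vnorm (vsub q p).
Proof.
have -> : vsub p q = vscale (-1) (vsub q p) by vring.
by rewrite vnormZ Rabs_Ropp Rabs_R1 Rmult_1_l.
Qed.

Lemma vnormB_le p q : vnorm (vsub p q) <= vnorm p + vnorm q.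
Proof.
have -> : vsub p q = vadd p (vscale (-1) q) by vring.
by apply: Rle_trans (vnormD_le _ _) _; rewrite vnormZ Rabs_Ropp Rabs_R1; lra.
Qed.

Lemma vnorm_le_vnormB p q : vnorm p <= vnorm (vsub p q) + vnorm q.
Proof. by rewrite {1}(_ : p = vadd (vsub p q) q); [apply: vnormD_le | vring]. Qed.

Lemma vnorm_dist p q : Rabs (vnorm p - vnorm q) <= vnorm (vsub p q).
Proof.
have := vnorm_le_vnormB p q; have := vnorm_le_vnormB q p.
by rewrite (vnormBC q); split_Rabs; lra.
Qed.

Lemma vnormBB p q r : vsub (vsub p r) (vsub q r) = vsub p q.
Proof. by vring. Qed.

Lemma vnormBxx p : vnorm (vsub p p) = 0.
Proof. by rewrite (_ : vsub p p = vzero) ?vnorm0 //; vring. Qed.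

Definition basis (k : 'I_d) : vec d := fun i => if i == k then 1 else 0.

Lemma dot_basisl k p : dot (basis k) p = p k.
Proof.
rewrite /dot (bigD1 k) //= /basis eqxx Rmult_1_l.
rewrite (eq_bigr (fun _ => 0)); last by move=> i /negbTE ->; ring.
by rewrite big1_eq; ring.
Qed.

Lemma orthogonal_vector p : (1 < d)%nat -> exists f, dot p f = 0 /\ 0 < dot f f.
Proof.
move=> hd; pose i0 : 'I_d := Ordinal (ltn_trans (ltnSn 0) hd); pose i1 : 'I_d := Ordinal hd.
case: (classic (exists k, p k <> 0)) => [[k hk]|]; last first.
  move=> hp; exists (basis i0); split; last by rewrite dot_basisl /basis eqxx; lra.
  by rewrite dotC dot_basisl; apply: NNPP => h0; apply: hp; exists i0.
pose j := if k == i0 then i1 else i0.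
have hjk : j != k by rewrite /j; case: (eqVneq k i0) => [-> //|]; rewrite eq_sym.
exists (vsub (vscale (p j) (basis k)) (vscale (p k) (basis j))).
split; first by rewrite dotBr !dotZr !(dotC p) !dot_basisl; ring.
rewrite dotBl !dotZl !dotBr !dotZr !dot_basisl /basis eqxx (negbTE hjk) eq_sym (negbTE hjk) eqxx.
by have := Rsqr_pos_lt _ hk; rewrite /Rsqr; nra.
Qed.

Lemma vnorm_dim1 (e p : vec d) : d = 1%nat -> dot e e = 1 -> vnorm p = Rabs (dot e p).
Proof.
move=> hd; subst d; rewrite /vnorm /dot !big_ord1 => he.
have h1 : Rabs (e ord0) = 1.
  have : Rabs (e ord0) * Rabs (e ord0) = 1 by rewrite -Rabs_mult he Rabs_R1.
  by have := Rabs_pos (e ord0); nra.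
by rewrite Rabs_mult h1 Rmult_1_l -(sqrt_Rsqr_abs (p ord0)).
Qed.

End Vectors.

(** * Events of full probability *)

Section Probability.
Variables (Omega : Type) (F : (Omega -> Prop) -> Prop) (P : (Omega -> Prop) -> R).
Hypothesis hP : probability F P.

Lemma predext (A B : Omega -> Prop) : (forall w, A w <-> B w) -> A = B.
Proof. by move=> h; apply: functional_extensionality => w; apply: propositional_extensionality. Qed.

Lemma event_True : F (fun _ => True).
Proof. by case: hP => [[]]. Qed.

Lemma event_compl {A} : F A -> F (fun w => ~ A w).
Proof. by case: hP => [[_ []]]; auto. Qed.

Lemma event_union (A : nat -> Omega -> Prop) :
  (forall n, F (A n)) -> F (fun w => exists n, A n w).
Proof. by case: hP => [[_ []]]; auto. Qed.

Lemma prob_ge0 A : F A -> 0 <= P A.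
Proof. by case: hP => [_ []]; auto. Qed.

Lemma prob_True : P (fun _ => True) = 1.
Proof. by case: hP => [_ [_ []]]. Qed.

Lemma prob_sigma_additive (A : nat -> Omega -> Prop) :
  (forall n, F (A n)) -> (forall n m w, n <> m -> A n w -> A m w -> False) ->
  infinite_sum (fun n => P (A n)) (P (fun w => exists n, A n w)).
Proof. by case: hP => [_ [_ [_ h]]]; apply: h. Qed.

Lemma event_False : F (fun _ => False).
Proof.
rewrite (_ : (fun _ => False) = fun w => ~ (fun _ => True) w); last by apply: predext; tauto.
exact/event_compl/event_True.
Qed.

Lemma infinite_sum_eventually (f : nat -> R) (l : R) (N : nat) :
  (forall n, (N <= n)%nat -> sum_f_R0 f n = l) -> infinite_sum f l.
Proof.
move=> h eps he; exists N => n /leP/h ->.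
by rewrite /Rdist Rminus_diag Rabs_R0.
Qed.

Lemma prob_False : P (fun _ => False) = 0.
Proof.
have := prob_sigma_additive (fun _ _ => False) (fun _ => event_False) ltac:(by []).
rewrite (_ : (fun w => exists n : nat, False) = fun _ => False); last first.
  by apply: predext => w; split => // [[]].
set c := P _ => hc; apply: NNPP => c0.
have [N HN] := hc (Rabs c / 2) ltac:(have := Rabs_pos_lt _ c0; lra).
have := HN N (Nat.le_refl _); have := HN N.+1 (Nat.le_succ_diag_r _).
by rewrite /Rdist /=; split_Rabs; lra.
Qed.

Lemma prob_union2 A B : F A -> F B -> (forall w, A w -> B w -> False) ->
  P (fun w => A w \/ B w) = P A + P B.
Proof.
move=> hA hB hAB.
pose S (n : nat) := match n with 0%nat => A | 1%nat => B | _ => fun _ => False end.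
have := prob_sigma_additive S ltac:(by case=> [|[|n]] //=; exact: event_False)
  ltac:(by case=> [|[|?]] [|[|?]] w //= _; auto; move=> *; apply: (hAB w)).
rewrite (_ : (fun w => exists n, S n w) = fun w => A w \/ B w); last first.
  apply: predext => w; split; first by case=> [[|[|n]]] /=; tauto.
  by case=> ?; [exists 0%nat | exists 1%nat].
move/uniqueness_sum; apply; apply: (infinite_sum_eventually _ _ 1) => -[//|n] _.
by elim: n => [|n IH] //=; rewrite /= in IH; rewrite IH prob_False; ring.
Qed.

Lemma prob_compl A : F A -> P (fun w => ~ A w) = 1 - P A.
Proof.
move=> hA; have := prob_union2 A (fun w => ~ A w) hA (event_compl hA) ltac:(by []).
rewrite (_ : (fun w => A w \/ ~ A w) = fun _ => True); first by rewrite prob_True; lra.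
by apply: predext => w; split => // _; apply: classic.
Qed.

Lemma event_inter A B : F A -> F B -> F (fun w => A w /\ B w).
Proof.
move=> hA hB.
pose C (n : nat) := if n is 0%nat then fun w => ~ A w else fun w => ~ B w.
rewrite (_ : (fun w => A w /\ B w) = fun w => ~ exists n, C n w).
  by apply/event_compl/event_union => -[|n]; apply: event_compl.
apply: predext => w; split; first by move=> [a b] [[|n] /=].
by move=> h; split; apply: NNPP => hn; apply: h; [exists 0%nat | exists 1%nat].
Qed.

Lemma prob_le A B : F A -> F B -> (forall w, A w -> B w) -> P A <= P B.
Proof.
move=> hA hB hAB; have hBA := event_inter _ _ hB (event_compl hA).
rewrite (_ : B = fun w => A w \/ (B w /\ ~ A w)); last first.
  by apply: predext => w; split => [b|[/hAB|[]] //]; case: (classic (A w)); tauto.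
by rewrite prob_union2 //; [have := prob_ge0 _ hBA; lra | move=> w a []].
Qed.

Lemma event_prefix (E : nat -> Omega -> Prop) n :
  (forall k, F (E k)) -> F (fun w => forall k, (k < n)%nat -> E k w).
Proof.
move=> hE; elim: n => [|n IH].
  rewrite (_ : (fun w => _) = fun _ => True); first exact: event_True.
  by apply: predext => w; split => // _ k; rewrite ltn0.
rewrite (_ : (fun w => _) = fun w => (forall k, (k < n)%nat -> E k w) /\ E n w).
  exact: event_inter.
apply: predext => w; split => [h|[h1 h2] k].
  by split => [k hk|]; apply: h; [apply: ltnW|].
by rewrite ltnS leq_eqVlt => /orP [/eqP -> //|]; apply: h1.
Qed.

Lemma least_witness (Q : nat -> Prop) n :
  Q n -> exists m, Q m /\ forall k, (k < m)%nat -> ~ Q k.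
Proof.
elim/ltn_ind: n => n IH hn.
case: (classic (exists k, (k < n)%nat /\ Q k)) => [[k [hk qk]] | h]; first exact: IH k hk qk.
by exists n; split => // k hk qk; apply: h; exists k.
Qed.

(* The sets B n where E n fails for the first time are disjoint null events. *)
Lemma prob_countable_inter (E : nat -> Omega -> Prop) :
  (forall n, F (E n) /\ P (E n) = 1) ->
  F (fun w => forall n, E n w) /\ P (fun w => forall n, E n w) = 1.
Proof.
move=> hE; have FE n : F (E n) by case: (hE n).
pose B n w := ~ E n w /\ forall k, (k < n)%nat -> E k w.
have FB n : F (B n) by apply: event_inter; [apply: event_compl | apply: event_prefix].
have PB n : P (B n) = 0.
  apply: Rle_antisym; last exact: prob_ge0.
  have := prob_le _ _ (FB n) (event_compl (FE n)) ltac:(by move=> w []).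
  by rewrite prob_compl // (proj2 (hE n)); lra.
have B_disj n m w : n <> m -> B n w -> B m w -> False.
  move=> nm [h1 h2] [h3 h4]; case: (ltngtP n m) => [/h4|/h2|/eqP] //; exact/negP/eqP.
have PU : P (fun w => exists n, B n w) = 0.
  apply: (uniqueness_sum _ _ _ (prob_sigma_additive B FB B_disj)).
  apply: (infinite_sum_eventually _ _ 0) => n _.
  by elim: n => [|n IH] /=; rewrite ?IH PB; ring.
rewrite (_ : (fun w => _) = fun w => ~ exists n, B n w).
  by rewrite prob_compl ?PU; [split; [apply/event_compl/event_union | ring] | apply: event_union].
apply: predext => w; split => [h [n [hn _]] // | h n]; apply: NNPP => hn; apply: h.
have [m [hm hmin]] := least_witness (fun m => ~ E m w) n hn.
by exists m; split => // k /hmin/NNPP.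
Qed.

Lemma almost_surely_forall_nat (Q : nat -> Omega -> Prop) :
  (forall n, almost_surely F P (Q n)) -> almost_surely F P (fun w => forall n, Q n w).
Proof.
move=> /(_ _)/constructive_indefinite_description hQ.
pose E n := proj1_sig (hQ n).
have hE n : F (E n) /\ P (E n) = 1 /\ forall w, E n w -> Q n w by exact: proj2_sig (hQ n).
have [FE PE] := prob_countable_inter E (fun n => conj (proj1 (hE n)) (proj1 (proj2 (hE n)))).
by exists (fun w => forall n, E n w); do 2!split => //; move=> w hw n; apply: (proj2 (proj2 (hE n))).
Qed.

Lemma almost_surely_and (Q1 Q2 : Omega -> Prop) :
  almost_surely F P Q1 -> almost_surely F P Q2 -> almost_surely F P (fun w => Q1 w /\ Q2 w).
Proof.
move=> h1 h2; have [E [FE [PE hQ]]] := almost_surely_forall_nat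
  (fun n => if n is 0%nat then Q1 else Q2) (fun n => if n is 0%nat then h1 else h2).
by exists E; do 2!split => //; move=> w /hQ h; split; [apply: (h 0%nat) | apply: (h 1%nat)].
Qed.

Lemma almost_surely_sure (Q : Omega -> Prop) : (forall w, Q w) -> almost_surely F P Q.
Proof. by move=> h; exists (fun _ => True); split; [exact: event_True | split; [exact: prob_True|]]. Qed.

End Probability.

Lemma almost_surely_impl Omega F P (Q1 Q2 : Omega -> Prop) :
  almost_surely F P Q1 -> (forall w, Q1 w -> Q2 w) -> almost_surely F P Q2.
Proof. by move=> [E [h1 [h2 h3]]] h; exists E; do 2!split => //; move=> w /h3/h. Qed.

(** * Compactness *)

Lemma nat_gt (x : R) : exists n : nat, x < INR n.
Proof. by have [n hn] := INR_archimed 1 x Rlt_0_1; exists n; lra. Qed.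

Lemma inv_succ_lt (eps : R) : 0 < eps ->
  exists N : nat, forall n, (N <= n)%nat -> 1 / INR n.+1 < eps.
Proof.
move=> he; have [N hN] := nat_gt (1 / eps); exists N => n /leP/le_INR hn.
have hn1 : INR n + 1 = INR n.+1 by rewrite S_INR.
have n0 := pos_INR n.
have : 1 < INR n.+1 * eps.
  have e1 : 1 / eps * eps = 1 by field; lra.
  by have := Rmult_lt_compat_r eps _ _ he hN; rewrite e1; nra.
move=> h; apply: (Rmult_lt_reg_r (INR n.+1)); first lra.
have -> : 1 / INR n.+1 * INR n.+1 = 1 by field; lra.
lra.
Qed.

Definition increasingn (phi : nat -> nat) := forall n, (phi n < phi n.+1)%nat.

Lemma increasing_ge phi : increasingn phi -> forall n, (n <= phi n)%nat.
Proof. by move=> h; elim=> [|n IH] //; apply: leq_ltn_trans IH (h n). Qed.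

Lemma increasing_comp phi psi :
  increasingn phi -> increasingn psi -> increasingn (fun n => phi (psi n)).
Proof.
move=> hp hq n; have mono a b : (a < b)%nat -> (phi a < phi b)%nat.
  elim: b => [//|b IH]; rewrite ltnS leq_eqVlt => /orP [/eqP -> //|/IH h].
  exact: ltn_trans h (hp b).
exact: mono (hq n).
Qed.

Lemma bolzano_weierstrass_R (a : nat -> R) (B : R) : (forall n, Rabs (a n) <= B) ->
  exists phi l, increasingn phi /\ forall eps, 0 < eps ->
    exists N, forall n, (N <= n)%nat -> Rabs (a (phi n) - l) < eps.
Proof.
move=> hB.
have [l hl] := Bolzano_Weierstrass a (fun c => - B <= c <= B) (compact_P3 _ _)
  ltac:(by move=> n; have := hB n; split_Rabs; lra).
have close N k : exists p, (N <= p)%nat /\ Rabs (a p - l) < 1 / INR k.+1.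
  have hk : 0 < 1 / INR k.+1 by apply: Rdiv_lt_0_compat; [lra | apply: lt_0_INR; lia].
  have [p [/leP hp1 hp2]] := hl (fun y => Rabs (y - l) < 1 / INR k.+1) N
    ltac:(by exists (mkposreal _ hk)).
  by exists p.
pose G N k := proj1_sig (constructive_indefinite_description _ (close N k)).
have hG N k : (N <= G N k)%nat /\ Rabs (a (G N k) - l) < 1 / INR k.+1.
  exact: proj2_sig (constructive_indefinite_description _ (close N k)).
pose fix phi n := if n is m.+1 then G (phi m).+1 n else G 0%nat 0%nat.
exists phi, l; split => [n|eps he]; first exact: (proj1 (hG _ _)).
have [N hN] := inv_succ_lt eps he; exists N => n hn.
apply: Rlt_trans (hN n hn); by case: n {hn} => [|n]; apply: (proj2 (hG _ _)).
Qed.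

Definition vconverges d (z : nat -> vec d) (l : vec d) :=
  forall eps, 0 < eps -> exists N, forall n, (N <= n)%nat -> vnorm (vsub (z n) l) < eps.

Lemma choice_max_index d (Q : 'I_d -> nat -> Prop) :
  (forall i N M, (N <= M)%nat -> Q i N -> Q i M) -> (forall i, exists N, Q i N) ->
  exists N, forall i, Q i N.
Proof.
move=> mono /(_ _)/constructive_indefinite_description hQ.
exists (\max_(i < d) proj1_sig (hQ i)) => i.
exact: mono (leq_bigmax_cond i _) (proj2_sig (hQ i)).
Qed.

Lemma bolzano_weierstrass d (z : nat -> vec d) (B : R) : (forall n, vnorm (z n) <= B) ->
  exists phi l, increasingn phi /\ vconverges d (fun n => z (phi n)) l.
Proof.
move=> hB.
have coords k : (k <= d)%nat -> exists phi (l : vec d), increasingn phi /\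
    forall i : 'I_d, (i < k)%nat -> forall eps, 0 < eps ->
      exists N, forall n, (N <= n)%nat -> Rabs (z (phi n) i - l i) < eps.
  elim: k => [|k IH] hk; first by exists (fun n => n), vzero; split => // n /=.
  have [phi [l [hphi hl]]] := IH (ltnW hk).
  pose i0 : 'I_d := Ordinal hk.
  have [psi [l0 [hpsi hl0]]] := bolzano_weierstrass_R (fun n => z (phi n) i0) B
    ltac:(by move=> n; apply: Rle_trans (coord_le_vnorm _ _) (hB _)).
  exists (fun n => phi (psi n)), (fun i => if i == i0 then l0 else l i).
  split => [|i hi eps he]; first exact: increasing_comp.
  case: eqP => [-> //|ne]; first exact: hl0.
  have hik : (i < k)%nat.
    by move: hi; rewrite ltnS leq_eqVlt => /orP [/eqP e|//]; case: ne; apply: val_inj.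
  have [N hN] := hl i hik eps he; exists N => n hn.
  by apply: hN; apply: leq_trans hn (increasing_ge _ hpsi n).
have [phi [l [hphi hl]]] := coords d (leqnn d).
exists phi, l; split => // eps he.
have hd : 0 < INR d + 1 by have := pos_INR d; lra.
set eta := eps / 2 / (INR d + 1).
have heta : 0 < eta by rewrite /eta; apply: Rdiv_lt_0_compat; lra.
have [N hN] := choice_max_index d
  (fun i N => forall n, (N <= n)%nat -> Rabs (z (phi n) i - l i) < eta)
  ltac:(by move=> i N M hNM h n hn; apply: h; apply: leq_trans hNM hn)
  ltac:(by move=> i; exact: hl i (ltn_ord i) eta heta).
exists N => n hn.
apply: Rle_lt_trans (vnorm_le_coord eta _ _ _) _.
- lra.
- by move=> i; apply: Rlt_le; apply: hN.
- by rewrite /eta; field_simplify; lra.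
Qed.

Definition vclosed d (S : vec d -> Prop) :=
  forall z, (forall eps, 0 < eps -> exists z', S z' /\ vnorm (vsub z' z) < eps) -> S z.

Definition vcontinuous_at d (f : vec d -> R) (z : vec d) :=
  forall eps, 0 < eps -> exists delta, 0 < delta /\
    forall z', vnorm (vsub z' z) < delta -> Rabs (f z' - f z) < eps.

Section ExtremeValue.
Variables (d : nat) (S : vec d -> Prop) (f : vec d -> R) (B : R).
Hypotheses (S_bounded : forall z, S z -> vnorm z <= B) (S_closed : vclosed d S)
  (f_cont : forall z, S z -> vcontinuous_at d f z).

Lemma limit_point_in_set (zs : nat -> vec d) : (forall n, S (zs n)) ->
  exists phi l, increasingn phi /\ S l /\
    forall eps, 0 < eps -> exists N, forall n, (N <= n)%nat -> Rabs (f (zs (phi n)) - f l) < eps.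
Proof.
move=> hzs; have [phi [l [hphi hl]]] := bolzano_weierstrass d zs B (fun n => S_bounded _ (hzs n)).
have Sl : S l.
  apply: S_closed => eps he; have [N hN] := hl eps he.
  by exists (zs (phi N)); split => //; apply: hN.
exists phi, l; split => //; split => // eps he.
have [de [hde hde']] := f_cont l Sl eps he.
by have [N hN] := hl de hde; exists N => n /hN/hde'.
Qed.

Lemma continuous_bounded_below : exists m, forall z, S z -> m <= f z.
Proof.
apply: NNPP => hn.
have low n : exists z, S z /\ f z < - INR n.
  apply: NNPP => hn2; apply: hn; exists (- INR n) => z hz.
  by apply: Rnot_lt_le => c; apply: hn2; exists z.
have /(_ _)/constructive_indefinite_description zs := low.
have [phi [l [hphi [_ hl]]]] := limit_point_in_set (fun n => proj1_sig (zs n))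
  (fun n => proj1 (proj2_sig (zs n))).
have [N hN] := hl 1 Rlt_0_1; have [n1 hn1] := nat_gt (- f l + 1).
pose n := maxn N n1; have := hN n (leq_maxl _ _).
have := proj2 (proj2_sig (zs (phi n))).
have : INR n1 <= INR (phi n).
  by apply/le_INR/leP; apply: leq_trans (leq_maxr N n1) (increasing_ge _ hphi n).
by split_Rabs; lra.
Qed.

Lemma extreme_value : (exists z, S z) -> exists z0, S z0 /\ forall z, S z -> f z0 <= f z.
Proof.
move=> [z1 hz1]; have [m hm] := continuous_bounded_below.
have [s [hs1 hs2]] := completeness (fun y => exists z, S z /\ y = - f z)
  ltac:(by exists (- m) => y [z [hz ->]]; have := hm z hz; lra)
  ltac:(by exists (- f z1), z1).
have hlow z : S z -> - s <= f z by move=> hz; have := hs1 (- f z) (ex_intro _ z (conj hz erefl)); lra.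
have near n : exists z, S z /\ f z < - s + 1 / INR n.+1.
  apply: NNPP => hn; have hp : 0 < 1 / INR n.+1 by apply: Rdiv_lt_0_compat; [lra | apply: lt_0_INR; lia].
  suff : s <= s - 1 / INR n.+1 by lra.
  apply: hs2 => y [z [hz ->]]; apply: Rnot_lt_le => c; apply: hn; exists z; split => //; lra.
have /(_ _)/constructive_indefinite_description zs := near.
have [phi [l [hphi [Sl hl]]]] := limit_point_in_set (fun n => proj1_sig (zs n))
  (fun n => proj1 (proj2_sig (zs n))).
exists l; split => // z hz; apply: Rle_trans (hlow z hz); apply: Rnot_lt_le => c.
have [N1 hN1] := hl ((f l + s) / 2) ltac:(lra).
have [N2 hN2] := inv_succ_lt ((f l + s) / 2) ltac:(lra).
pose n := maxn N1 N2; have := hN1 n (leq_maxl _ _).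
have := proj2 (proj2_sig (zs (phi n))).
have := hN2 (phi n) (leq_trans (leq_maxr N1 N2) (increasing_ge _ hphi n)).
by split_Rabs; lra.
Qed.

End ExtremeValue.

Section Continuity.
Variables (d : nat) (z : vec d).

Lemma vcontinuous_at_lipschitz (a : vec d -> R) :
  (forall z', Rabs (a z' - a z) <= vnorm (vsub z' z)) -> vcontinuous_at d a z.
Proof. by move=> h eps he; exists eps; split => // z'; apply: Rle_lt_trans (h z'). Qed.

Lemma vcontinuous_atD (f g : vec d -> R) : vcontinuous_at d f z -> vcontinuous_at d g z ->
  vcontinuous_at d (fun y => f y + g y) z.
Proof.
move=> hf hg eps he.
have [d1 [h1 h1']] := hf (eps / 2) ltac:(lra); have [d2 [h2 h2']] := hg (eps / 2) ltac:(lra).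
exists (Rmin d1 d2); split => [|z' hz]; first exact: Rmin_glb_lt.
have := h1' z' (Rlt_le_trans _ _ _ hz (Rmin_l _ _)).
have := h2' z' (Rlt_le_trans _ _ _ hz (Rmin_r _ _)).
by split_Rabs; lra.
Qed.

Lemma vcontinuous_atZ (f : vec d -> R) (c : R) : vcontinuous_at d f z ->
  vcontinuous_at d (fun y => c * f y) z.
Proof.
move=> hf eps he; have hc := Rabs_pos c.
have [de [hde hde']] := hf (eps / (Rabs c + 1)) ltac:(apply: Rdiv_lt_0_compat; lra).
exists de; split => // z' /hde' h.
rewrite -Rmult_minus_distr_l Rabs_mult.
have e1 : eps / (Rabs c + 1) * (Rabs c + 1) = eps by field; lra.
have := Rabs_pos (f z' - f z).
have := Rmult_lt_compat_r (Rabs c + 1) _ _ ltac:(lra) h; rewrite e1; nra.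
Qed.

Lemma vcontinuous_at_sqr (a : vec d -> R) :
  (forall z', Rabs (a z' - a z) <= vnorm (vsub z' z)) -> vcontinuous_at d (fun y => a y * a y) z.
Proof.
move=> h eps he; have hA := Rabs_pos (a z).
set de := Rmin 1 (eps / (2 * Rabs (a z) + 2)).
have hpos : 0 < eps / (2 * Rabs (a z) + 2) by apply: Rdiv_lt_0_compat; lra.
have hde : 0 < de by apply: Rmin_glb_lt; lra.
exists de; split => // z' hz'.
have hx : Rabs (a z' - a z) < de by have := h z'; lra.
rewrite (_ : a z' * a z' - a z * a z = (a z' - a z) * (a z' - a z + 2 * a z)); last ring.
rewrite Rabs_mult.
have hb : Rabs (a z' - a z + 2 * a z) <= de + 2 * Rabs (a z).
  apply: Rle_trans (Rabs_triang _ _) _; rewrite Rabs_mult (Rabs_right 2); lra.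
apply: Rle_lt_trans (Rmult_le_compat _ _ _ _ (Rabs_pos _) (Rabs_pos _) (Rlt_le _ _ hx) hb) _.
have h3 : de * (2 * Rabs (a z) + 2) <= eps.
  have := Rmult_le_compat_r (2 * Rabs (a z) + 2) _ _ ltac:(lra) (Rmin_r 1 (eps / (2 * Rabs (a z) + 2))).
  by rewrite -/de (_ : eps / _ * _ = eps) //; field; lra.
by have := Rmin_l 1 (eps / (2 * Rabs (a z) + 2)); rewrite -/de; nra.
Qed.

End Continuity.

(** * Projection onto a closed convex set *)

Definition convex_set d (C : vec d -> Prop) :=
  forall z1 z2 t, 0 <= t <= 1 -> C z1 -> C z2 -> C (vadd (vscale t z1) (vscale (1 - t) z2)).

Lemma dot_add_scale_sqr d (a b : vec d) s :
  dot (vadd a (vscale s b)) (vadd a (vscale s b)) = dot a a + 2 * s * dot a b + s * s * dot b b.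
Proof. by rewrite dotDD dotZr dotZl dotZr; ring. Qed.

Section ClosestPoint.
Variables (d : nat) (C : vec d -> Prop) (q : vec d).

Lemma closest_point_exists (B : R) : (exists z, C z) -> (forall z, C z -> vnorm z <= B) ->
  vclosed d C -> exists zs, C zs /\ forall z, C z -> vnorm (vsub zs q) <= vnorm (vsub z q).
Proof.
move=> hne hB hcl.
have [zs [Czs hmin]] := extreme_value d C (fun z => vnorm (vsub z q) * vnorm (vsub z q)) B hB hcl
  ltac:(move=> z _; apply: vcontinuous_at_sqr => z'; rewrite -(vnormBB z' z q); apply: vnorm_dist) hne.
exists zs; split => // z /hmin.
by have := vnorm_ge0 (vsub z q); have := vnorm_ge0 (vsub zs q); nra.
Qed.

(* Otherwise moving from zs a little towards z would bring it closer to q. *)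
Lemma closest_point_variational zs : convex_set d C -> C zs ->
  (forall z, C z -> vnorm (vsub zs q) <= vnorm (vsub z q)) ->
  forall z, C z -> 0 <= dot (vsub zs q) (vsub z zs).
Proof.
move=> hcv Czs hmin z Cz; apply: Rnot_lt_le => hD.
set D := dot _ _ in hD; set N := dot (vsub z zs) (vsub z zs).
have hN : 0 <= N by apply: dot_ge0.
set s := Rmin 1 (- D / (N + 1)).
have hs0 : 0 < s by apply: Rmin_glb_lt; [lra | apply: Rdiv_lt_0_compat; lra].
have hs2 : s * (N + 1) <= - D.
  have := Rmult_le_compat_r (N + 1) _ _ ltac:(lra) (Rmin_r 1 (- D / (N + 1))).
  by rewrite -/s (_ : - D / (N + 1) * (N + 1) = - D) //; field; lra.
have := hmin _ (hcv z zs s (conj (Rlt_le _ _ hs0) (Rmin_l _ _)) Cz Czs).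
have -> : vsub (vadd (vscale s z) (vscale (1 - s) zs)) q = vadd (vsub zs q) (vscale s (vsub z zs)).
  by vring.
move=> h; have := Rmult_le_compat _ _ _ _ (vnorm_ge0 _) (vnorm_ge0 _) h h.
rewrite !vnorm_sqr dot_add_scale_sqr -/D -/N => h2.
have : 0 <= s * (2 * D + s * N) by nra.
by nra.
Qed.

Lemma closest_point_separation (B r : R) :
  (exists z, C z) -> (forall z, C z -> vnorm z <= B) -> vclosed d C -> convex_set d C ->
  0 < r -> (forall z, C z -> r <= vnorm (vsub z q)) ->
  exists zs e, C zs /\ dot e e = 1 /\ dot e q <= dot e zs - r /\
    (forall z, C z -> dot e zs <= dot e z) /\
    (forall z, C z -> vnorm (vsub zs q) <= vnorm (vsub z q)).
Proof.
move=> hne hB hcl hcv hr hfar.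
have [zs [Czs hmin]] := closest_point_exists B hne hB hcl.
have var := closest_point_variational zs hcv Czs hmin.
set n := vnorm (vsub zs q); have hn : r <= n by apply: hfar.
exists zs, (vscale (1 / n) (vsub zs q)); do !split => //.
- by rewrite dotZl dotZr -vnorm_sqr -/n; field; lra.
- suff : dot (vscale (1 / n) (vsub zs q)) zs - dot (vscale (1 / n) (vsub zs q)) q = n by lra.
  by rewrite -dotBr dotZl -vnorm_sqr -/n; field; lra.
- move=> z /var; rewrite dotBr !dotZl => h.
  have h1n : 0 < 1 / n by apply: Rdiv_lt_0_compat; lra.
  by have := Rmult_le_compat_l _ _ _ (Rlt_le _ _ h1n) h; nra.
Qed.

End ClosestPoint.

(** * Coercive quasiconcave functions *)

Definition locally_unif_continuous d (h : vec d -> R) :=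
  forall r, exists rho, modulus rho /\
    forall p q, vnorm p <= r -> vnorm q <= r -> Rabs (h p - h q) <= rho (vnorm (vsub p q)).

Lemma locally_unif_continuousP d (h : vec d -> R) : locally_unif_continuous d h ->
  forall r eps, 0 < eps -> exists delta, 0 < delta /\ forall p q, vnorm p <= r -> vnorm q <= r ->
    vnorm (vsub p q) < delta -> Rabs (h p - h q) < eps.
Proof.
move=> hc r eps he; have [rho [hmod hr]] := hc r; have [de [hde hde2]] := hmod eps he.
exists de; split => // p q hp hq hpq; apply: Rle_lt_trans (hr p q hp hq) _.
by apply: Rle_lt_trans (Rle_abs _) _; apply: hde2 => //; apply: vnorm_ge0.
Qed.

Lemma continuity_segment d (h : vec d -> R) (a b : vec d) : locally_unif_continuous d h ->
  continuity (fun s => h (vadd a (vscale s (vsub b a)))).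
Proof.
move=> hc s0 eps he; set n := vnorm (vsub b a); have hn : 0 <= n := vnorm_ge0 _.
have [de [hde hde2]] := locally_unif_continuousP d h hc (vnorm a + (Rabs s0 + 1) * n) eps he.
have bound t : Rabs t <= Rabs s0 + 1 ->
    vnorm (vadd a (vscale t (vsub b a))) <= vnorm a + (Rabs s0 + 1) * n.
  by move=> ht; apply: Rle_trans (vnormD_le _ _) _; rewrite vnormZ -/n; have := Rabs_pos t; nra.
exists (Rmin 1 (de / (n + 1))); split; first by apply: Rmin_glb_lt; [lra | apply: Rdiv_lt_0_compat; lra].
move=> s [_]; rewrite /dist /= /R_dist => hs.
have hs1 := Rlt_le_trans _ _ _ hs (Rmin_l _ _); have hs2 := Rlt_le_trans _ _ _ hs (Rmin_r _ _).
apply: hde2; [apply: bound; move: hs1; split_Rabs; lra | apply: bound; lra |].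
rewrite (_ : vsub _ _ = vscale (s - s0) (vsub b a)); last by vring.
rewrite vnormZ -/n; have := Rabs_pos (s - s0).
have := Rmult_lt_compat_r (n + 1) _ _ ltac:(lra) hs2.
by rewrite (_ : de / (n + 1) * (n + 1) = de); [nra | field; lra].
Qed.

Definition quasiconcave_fun d (h : vec d -> R) :=
  forall c p q t, 0 <= t <= 1 -> c <= h p -> c <= h q -> c <= h (vadd (vscale t p) (vscale (1 - t) q)).

Section Coercive.
Context {d : nat}.
Variables (h : vec d -> R) (M r : R).
Hypotheses (h_cont : locally_unif_continuous d h) (M_pos : 0 < M)
  (h_coercive : forall p, r <= vnorm p -> M <= Rabs (h p)).

(* By the intermediate value theorem, as |h| >= M > 0 all along the segment. *)
Lemma superlevel_segment a b :
  (forall s, 0 <= s <= 1 -> r <= vnorm (vadd a (vscale s (vsub b a)))) -> M <= h a -> M <= h b.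
Proof.
move=> hpath ha; pose g s := h (vadd a (vscale s (vsub b a))).
have g0 : g 0 = h a by rewrite /g (_ : vadd _ _ = a) //; vring.
have g1 : g 1 = h b by rewrite /g (_ : vadd _ _ = b) //; vring.
have hg s : 0 <= s <= 1 -> M <= Rabs (g s) by move=> /hpath/h_coercive.
apply: Rnot_lt_le => hlt.
have hb : h b < 0 by have := hg 1 ltac:(lra); rewrite g1; split_Rabs; lra.
have cg : continuity (fun s => - g s) by apply/continuity_opp/continuity_segment.
have [z [hz gz]] := IVT (fun s => - g s) 0 1 cg Rlt_0_1
  ltac:(by cbv beta; rewrite g0; lra) ltac:(by cbv beta; rewrite g1; lra).
by have := hg z hz; rewrite (_ : g z = 0) ?Rabs_R0; lra.
Qed.

Lemma superlevel_radial p : 0 < r -> r <= vnorm p -> M <= h p -> M <= h (vscale (r / vnorm p) p).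
Proof.
move=> hr hp; apply: superlevel_segment => s hs.
rewrite (_ : vadd _ _ = vscale (1 - s + s * (r / vnorm p)) p); last by vring.
have hq : 0 <= s * (r / vnorm p) by have := Rdiv_lt_0_compat r (vnorm p) hr ltac:(lra); nra.
rewrite vnormZ Rabs_right; last lra.
rewrite (_ : (1 - s + s * (r / vnorm p)) * vnorm p = (1 - s) * vnorm p + s * r); first nra.
by field; lra.
Qed.

(* In dimension at least two a far superlevel point p can be joined to -p outside the ball,
   and quasiconcavity then forces the superlevel set to contain the midpoint 0. *)
Lemma far_below_superlevel :
  (1 < d)%nat -> Rabs (h vzero) < M ->
  quasiconcave_fun d h ->
  forall p, r <= vnorm p -> h p < M.
Proof.
move=> hd h0 hqc p hp; apply: Rnot_le_lt => hh.
have np : 0 < vnorm p.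
  apply: Rnot_le_lt => /(Rle_antisym _ _)/(_ (vnorm_ge0 p))/vnorm_eq0 p0.
  by move: hh; rewrite p0; split_Rabs; lra.
have [f [fp ff]] := orthogonal_vector p hd.
set L := (vnorm p + 1) / vnorm f.
have nf : 0 < vnorm f by apply: Rnot_le_lt => hf; have := vnorm_sqr f; have := vnorm_ge0 f; nra.
have hL : vnorm p * vnorm p <= L * L * dot f f.
  rewrite -vnorm_sqr (_ : L * L * _ = (vnorm p + 1) * (vnorm p + 1)); first nra.
  by rewrite /L; field; lra.
have far al be : 1 <= al * al \/ vnorm p * vnorm p <= be * be * dot f f ->
    r <= vnorm (vadd (vscale al p) (vscale be f)).
  move=> hab; apply: Rle_trans hp _; apply: vnorm_ge; first lra.
  rewrite dotDD !dotZl !dotZr fp -vnorm_sqr; have := dot_ge0 f; case: hab; nra.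
have step1 : M <= h (vadd (vscale 1 p) (vscale L f)).
  apply: superlevel_segment hh => s hs; rewrite (_ : vadd _ _ = vadd (vscale 1 p) (vscale (s * L) f)).
    by apply: far; left; lra.
  by vring.
have step2 : M <= h (vadd (vscale (-1) p) (vscale L f)).
  apply: superlevel_segment step1 => s hs.
  rewrite (_ : vadd _ _ = vadd (vscale (1 - 2 * s) p) (vscale L f)).
    by apply: far; right.
  by vring.
have step3 : M <= h (vscale (-1) p).
  apply: superlevel_segment step2 => s hs.
  rewrite (_ : vadd _ _ = vadd (vscale (-1) p) (vscale ((1 - s) * L) f)).
    by apply: far; left; lra.
  by vring.
have := hqc M p (vscale (-1) p) (1 / 2) ltac:(lra) hh step3.
by rewrite (_ : vadd _ _ = vzero); [split_Rabs; lra | vring].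
Qed.

End Coercive.

(** * A comparison principle for semidifferentials *)

Section ProjPerp.
Context {d : nat}.
Variable e : vec d.
Hypothesis he : dot e e = 1.

Definition proj_perp (p : vec d) : vec d := vsub p (vscale (dot e p) e).

Lemma dot_proj_perp p : dot e (proj_perp p) = 0.
Proof. by rewrite /proj_perp dotBr dotZr he; ring. Qed.

Lemma dot_proj_perp_sqr p : dot p p = dot e p * dot e p + dot (proj_perp p) (proj_perp p).
Proof.
rewrite {1 2}(_ : p = vadd (vscale (dot e p) e) (proj_perp p)); last by rewrite /proj_perp; vring.
by rewrite dotDD !dotZl !dotZr dot_proj_perp he; ring.
Qed.

Lemma proj_perpD p q : proj_perp (vadd p q) = vadd (proj_perp p) (proj_perp q).
Proof. by rewrite /proj_perp dotDr; vring. Qed.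

Lemma proj_perpB p q : proj_perp (vsub p q) = vsub (proj_perp p) (proj_perp q).
Proof. by rewrite /proj_perp dotBr; vring. Qed.

Lemma proj_perpZ_unit t : proj_perp (vscale t e) = vzero.
Proof. by rewrite /proj_perp dotZr he; vring. Qed.

Lemma vnorm_proj_perp_le p : vnorm (proj_perp p) <= vnorm p.
Proof. by apply: vnorm_le; [exact: vnorm_ge0 | rewrite vnorm_sqr (dot_proj_perp_sqr p); nra]. Qed.

Lemma vnorm_unit : vnorm e = 1.
Proof. by rewrite /vnorm he sqrt_1. Qed.

Lemma dot_unit_le p : Rabs (dot e p) <= vnorm p.
Proof. by have := cauchy_schwarz e p; rewrite vnorm_unit Rmult_1_l. Qed.

Lemma vnorm_le_proj_perp p : vnorm p <= Rabs (dot e p) + vnorm (proj_perp p).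
Proof.
rewrite {1}(_ : p = vadd (vscale (dot e p) e) (proj_perp p)); last by rewrite /proj_perp; vring.
by apply: Rle_trans (vnormD_le _ _) _; rewrite vnormZ vnorm_unit Rmult_1_r; lra.
Qed.

End ProjPerp.

Section LipschitzLimits.
Variables (d : nat) (g : vec d -> R) (c : R) (y : vec d).
Hypothesis g_lip : forall z, Rabs (g z - g y) <= vnorm (vsub z y).

Lemma lipschitz_ge_limit :
  (forall eps, 0 < eps -> exists z, c <= g z /\ vnorm (vsub z y) < eps) -> c <= g y.
Proof.
move=> h; apply: Rnot_lt_le => hc; have [z [h1 h2]] := h (c - g y) ltac:(lra).
by have := g_lip z; split_Rabs; lra.
Qed.

Lemma lipschitz_le_limit :
  (forall eps, 0 < eps -> exists z, g z <= c /\ vnorm (vsub z y) < eps) -> g y <= c.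
Proof.
move=> h; apply: Rnot_lt_le => hc; have [z [h1 h2]] := h (g y - c) ltac:(lra).
by have := g_lip z; split_Rabs; lra.
Qed.

End LipschitzLimits.

Lemma subdiff_of_quadratic_minorant d (u : vec d -> R) (y0 g : vec d) (K r0 : R) :
  0 < r0 -> 0 <= K ->
  (forall y, vnorm (vsub y y0) < r0 ->
     - K * (vnorm (vsub y y0) * vnorm (vsub y y0)) <= u y - u y0 - dot g (vsub y y0)) ->
  subdiff u y0 g.
Proof.
move=> hr0 hK hu eta heta.
exists (Rmin r0 (eta / (K + 1))); split; first by apply: Rmin_glb_lt => //; apply: Rdiv_lt_0_compat; lra.
move=> y [_ hy]; have := hu y (Rlt_le_trans _ _ _ hy (Rmin_l _ _)).
have := Rmult_lt_compat_r (K + 1) _ _ ltac:(lra) (Rlt_le_trans _ _ _ hy (Rmin_r _ _)).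
rewrite (_ : eta / (K + 1) * (K + 1) = eta); last by field; lra.
by have := vnorm_ge0 (vsub y y0); nra.
Qed.

Section TiltedTestFunction.
Variables (d : nat) (u : vec d -> R) (x e : vec d) (a K k T rho : R).
Hypotheses (he : dot e e = 1) (hK : 0 < K) (hk : 0 < k) (hT : 0 < T) (hrho : 0 < rho).

Let t y := dot e (vsub y x).
Let n y := vnorm (proj_perp e (vsub y x)).
Let psi y := u y + (- a) * t y + K * (t y * t y) + k * (n y * n y).
Let box y := (0 <= t y /\ t y <= T) /\ n y <= rho.

Lemma tilt_t_lipschitz y y' : Rabs (t y' - t y) <= vnorm (vsub y' y).
Proof. by rewrite /t -dotBr vnormBB; apply: dot_unit_le. Qed.

Lemma tilt_n_lipschitz y y' : Rabs (n y' - n y) <= vnorm (vsub y' y).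
Proof.
by apply: Rle_trans (vnorm_dist _ _) _; rewrite -proj_perpB vnormBB; apply: vnorm_proj_perp_le.
Qed.

Lemma tilt_point s : 0 <= s -> t (vadd x (vscale s e)) = s /\ n (vadd x (vscale s e)) = 0.
Proof.
rewrite /t /n (_ : vsub (vadd x (vscale s e)) x = vscale s e); last by vring.
by rewrite proj_perpZ_unit // vnorm0 dotZr he; split; ring.
Qed.

Lemma tilt_box_x : box x.
Proof.
have [t0 n0] := tilt_point 0 (Rle_refl _).
by rewrite (_ : vadd x (vscale 0 e) = x) in t0 n0; [rewrite /box t0 n0; lra | vring].
Qed.

Lemma tilt_box_near y : box y -> vnorm (vsub y x) <= T + rho.
Proof.
move=> [[h1 h2] h3]; apply: Rle_trans (vnorm_le_proj_perp e he _) _.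
by rewrite Rabs_right; rewrite -/(t y) -/(n y); lra.
Qed.

Lemma tilt_min_exists : bounded_unif_continuous u ->
  exists ys, box ys /\ forall y, box y -> psi ys <= psi y.
Proof.
move=> [_ huc]; apply: (extreme_value d box psi (vnorm x + (T + rho))).
- move=> y /tilt_box_near; have := vnorm_le_vnormB y x; lra.
- move=> y hy; have near P : (forall z, box z -> P z) -> forall eps, 0 < eps ->
      exists z, P z /\ vnorm (vsub z y) < eps.
    by move=> hP eps /hy [z [/hP ? ?]]; exists z.
  split; first split.
  + apply: (lipschitz_ge_limit d t 0 y (tilt_t_lipschitz y)); apply: near; by move=> z [[]].
  + apply: (lipschitz_le_limit d t T y (tilt_t_lipschitz y)); apply: near; by move=> z [[]].
  + apply: (lipschitz_le_limit d n rho y (tilt_n_lipschitz y)); apply: near; by move=> z [].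
- move=> y _; apply: vcontinuous_atD; [apply: vcontinuous_atD; [apply: vcontinuous_atD|]|].
  + by move=> eps /huc [de [hde hde']]; exists de; split => // z /hde'.
  + by apply: vcontinuous_atZ; apply: vcontinuous_at_lipschitz => z; apply: tilt_t_lipschitz.
  + by apply: vcontinuous_atZ; apply: vcontinuous_at_sqr => z; apply: tilt_t_lipschitz.
  + by apply: vcontinuous_atZ; apply: vcontinuous_at_sqr => z; apply: tilt_n_lipschitz.
- by exists x; apply: tilt_box_x.
Qed.

Section Interior.
Variables (gam Cu : R).
Hypotheses (u_bound : forall y, Rabs (u y) <= Cu)
  (u_osc : forall y y', vnorm (vsub y' y) <= rho -> Rabs (u y' - u y) < gam / 2)
  (hkr : k * (rho * rho) = gam) (hKT : K * (T * T) = 2 * Cu + Rabs a * T + 1)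
  (dip : exists t1, 0 <= t1 <= T /\ u (vadd x (vscale t1 e)) + (- a) * t1 + K * (t1 * t1) <= u x - gam).

Section Minimizer.
Variable ys : vec d.
Hypotheses (box_ys : box ys) (psi_min : forall y, box y -> psi ys <= psi y).

(* On the box the quadratic part of psi has Hessian at most 2 (K + k), so an interior
   minimum of psi is a point where u is touched from below by a paraboloid. *)
Lemma tilt_min_subdiff : 0 < t ys < T -> n ys < rho ->
  subdiff u ys (vsub (vscale (a - 2 * K * t ys) e) (vscale (2 * k) (proj_perp e (vsub ys x)))).
Proof.
move=> [ts0 tsT] nsr; set P0 := proj_perp e (vsub ys x).
apply: (subdiff_of_quadratic_minorant d u ys _ (K + k) (Rmin (Rmin (t ys) (T - t ys)) (rho - n ys))).
  by repeat apply: Rmin_glb_lt; lra.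
  lra.
move=> y hy; set D := vsub y ys.
have hD1 := Rlt_le_trans _ _ _ hy (Rmin_l _ _); have hD2 := Rmin_r (Rmin (t ys) (T - t ys)) (rho - n ys).
have := Rmin_l (t ys) (T - t ys); have := Rmin_r (t ys) (T - t ys).
have := tilt_t_lipschitz ys y; have := tilt_n_lipschitz ys y => hn ht h1 h2.
have := psi_min y ltac:(rewrite /box; split; [split|]; move: hn ht; split_Rabs; lra).
have eD : vsub y x = vadd (vsub ys x) D by rewrite /D; vring.
have hP0 : dot P0 (proj_perp e D) = dot P0 D.
  by rewrite {1}/proj_perp dotBr dotZr (dotC P0 e) /P0 dot_proj_perp //; ring.
have ty : t y = t ys + dot e D by rewrite /t eD dotDr.
have ny : n y * n y = n ys * n ys + 2 * dot P0 D + dot (proj_perp e D) (proj_perp e D).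
  by rewrite /n eD proj_perpD vnorm_sqr dotDD hP0 -/P0 -vnorm_sqr.
rewrite /psi ty ny dotBl !dotZl -/P0.
have hDD := dot_proj_perp_sqr e he D; have := dot_ge0 (proj_perp e D).
rewrite -(vnorm_sqr D) in hDD; nra.
Qed.

Lemma tilt_min_t_gt0 : 0 < t ys.
Proof.
apply: Rnot_le_lt => h0; have t0 : t ys = 0 by case: box_ys => -[]; lra.
have [t1 [ht1 hy1]] := dip; have [tp np] := tilt_point t1 (proj1 ht1).
have := psi_min (vadd x (vscale t1 e)) ltac:(rewrite /box tp np; lra).
rewrite {2}/psi tp np.
have e0 : psi ys = u ys + k * (n ys * n ys) by rewrite /psi t0; ring.
have : vnorm (vsub ys x) <= rho.
  apply: Rle_trans (vnorm_le_proj_perp e he _) _; rewrite -/(t ys) -/(n ys) t0 Rabs_R0.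
  by case: box_ys; lra.
move/u_osc; have : 0 <= k * (n ys * n ys) by have := Rle_0_sqr (n ys); rewrite /Rsqr; nra.
by split_Rabs; lra.
Qed.

Lemma tilt_min_t_ltT : t ys < T.
Proof.
apply: Rnot_le_lt => hT'; have tT : t ys = T by case: box_ys => -[]; lra.
have := psi_min x tilt_box_x; rewrite /psi tT.
have [t0 n0] := tilt_point 0 (Rle_refl _).
rewrite (_ : vadd x (vscale 0 e) = x) in t0 n0; last by vring.
rewrite t0 n0; have := u_bound ys; have := u_bound x; have := Rle_abs a; have := Rle_abs (- a).
rewrite Rabs_Ropp; have := Rmult_le_pos _ _ (Rlt_le _ _ hk) (Rle_0_sqr (n ys)); rewrite /Rsqr.
by split_Rabs; nra.
Qed.

Lemma tilt_min_n_lt : n ys < rho.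
Proof.
apply: Rnot_le_lt => hr; have nr : n ys = rho by case: box_ys; lra.
set y' := vadd x (vscale (t ys) e).
have [tp np] := tilt_point (t ys) ltac:(case: box_ys => -[]; lra).
have := psi_min y' ltac:(rewrite /box -/y' tp np; case: box_ys => -[]; lra).
have -> : psi y' = u y' + - a * t ys + K * (t ys * t ys) by rewrite /psi tp np; ring.
have -> : psi ys = u ys + - a * t ys + K * (t ys * t ys) + gam by rewrite /psi nr hkr.
have : vnorm (vsub ys y') <= rho.
  rewrite (_ : vsub _ _ = proj_perp e (vsub ys x)); first by rewrite -/(n ys); lra.
  by rewrite /y' /proj_perp -/(t ys); vring.
by move/u_osc; split_Rabs; lra.
Qed.

End Minimizer.

Lemma tilted_subdiff_near : bounded_unif_continuous u ->
  exists y g, vnorm (vsub y x) <= T + rho /\ subdiff u y g /\ dot e g < a.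
Proof.
move=> /tilt_min_exists [ys [box_ys psi_min]].
have ts0 := tilt_min_t_gt0 ys box_ys psi_min.
have tsT := tilt_min_t_ltT ys box_ys psi_min.
have nsr := tilt_min_n_lt ys box_ys psi_min.
eexists ys, _; split; [exact: tilt_box_near | split; first exact: tilt_min_subdiff].
by rewrite dotBr !dotZr dot_proj_perp // he; nra.
Qed.

End Interior.
End TiltedTestFunction.

(* Otherwise, for e.q < a2 < al, the function u + K t^2 - a2 t + k |y_perp|^2 (t and y_perp the
   components of y - x along and across e) attains an interior minimum on a thin box next to x, where
   u then has a subdifferential of slope below a2 in direction e. *)
Lemma subdiff_slope_bound_superdiff d (u : vec d -> R) (x q e : vec d) (al s : R) :
  bounded_unif_continuous u -> superdiff u x q -> dot e e = 1 -> 0 < s ->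
  (forall y z, vnorm (vsub y x) < s -> subdiff u y z -> al <= dot e z) -> al <= dot e q.
Proof.
move=> hbuc hsup he hs hyp; apply: Rnot_lt_le => heq.
have [[Cu hCu] huc] := hbuc; have Cu0 : 0 <= Cu by have := hCu x; have := Rabs_pos (u x); lra.
set a1 := dot e q + (al - dot e q) / 3; set a2 := dot e q + 2 * (al - dot e q) / 3.
have [d1 [hd1 hd1']] := hsup (a1 - dot e q) ltac:(rewrite /a1; lra).
set T := Rmin d1 s / 3.
have hT : 0 < T by rewrite /T; have := Rmin_glb_lt _ _ _ hd1 hs; lra.
have [hTd1 hTs] : 3 * T <= d1 /\ 3 * T <= s by rewrite /T; have := Rmin_l d1 s; have := Rmin_r d1 s; lra.
set K := (2 * Cu + Rabs a2 * T + 1) / (T * T).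
have hKT : K * (T * T) = 2 * Cu + Rabs a2 * T + 1 by rewrite /K; field; lra.
have hK : 0 < K by rewrite /K; apply: Rdiv_lt_0_compat; have := Rabs_pos a2; nra.
set t1 := Rmin (T / 2) ((a2 - a1) / (2 * K)).
have ht1 : 0 < t1 by apply: Rmin_glb_lt; [lra | apply: Rdiv_lt_0_compat; rewrite /a1 /a2; lra].
have ht1T : t1 <= T / 2 := Rmin_l _ _.
have ht1K : K * t1 <= (a2 - a1) / 2.
  have := Rmult_le_compat_l K _ _ (Rlt_le _ _ hK) (Rmin_r (T / 2) ((a2 - a1) / (2 * K))).
  by rewrite -/t1 (_ : K * ((a2 - a1) / (2 * K)) = (a2 - a1) / 2) //; field; lra.
set gam := (a2 - a1) * t1 / 2.
have hgam : 0 < gam by rewrite /gam /a1 /a2; nra.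
have [du [hdu hdu']] := huc (gam / 2) ltac:(lra).
set rho := Rmin T (du / 2).
have hrho : 0 < rho by apply: Rmin_glb_lt; lra.
have [hrhoT hrhodu] : rho <= T /\ rho < du.
  by rewrite /rho; have := Rmin_l T (du / 2); have := Rmin_r T (du / 2); lra.
set k := gam / (rho * rho).
have hkr : k * (rho * rho) = gam by rewrite /k; field; lra.
have hk : 0 < k by rewrite /k; apply: Rdiv_lt_0_compat; nra.
have dip : exists t1,
    0 <= t1 <= T /\ u (vadd x (vscale t1 e)) + (- a2) * t1 + K * (t1 * t1) <= u x - gam.
  exists t1; split; first lra.
  have nx1 : vnorm (vsub (vadd x (vscale t1 e)) x) = t1.
    by rewrite (_ : vsub _ _ = vscale t1 e); [rewrite vnormZ vnorm_unit // Rabs_right; lra | vring].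
  have := hd1' (vadd x (vscale t1 e)); rewrite nx1 (_ : vsub _ x = vscale t1 e); last by vring.
  rewrite dotZr (dotC q e) /gam => /(_ ltac:(lra)).
  by nra.
have osc y y' : vnorm (vsub y' y) <= rho -> Rabs (u y' - u y) < gam / 2 by move=> ?; apply: hdu'; lra.
have [y [g [hy [hg hge]]]] :=
  tilted_subdiff_near d u x e a2 K k T rho he hK hk hT hrho gam Cu hCu osc hkr hKT dip hbuc.
have := hyp y g ltac:(lra) hg; rewrite /a2 in hge; lra.
Qed.

(** * From subdifferentials to superdifferentials *)

Lemma superlevel_ball_closed d (h : vec d -> R) (R0 c : R) : locally_unif_continuous d h ->
  vclosed d (fun z => vnorm z <= R0 /\ c <= h z).
Proof.
move=> hc z hz.
have nz : vnorm z <= R0.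
  apply: (lipschitz_le_limit d vnorm R0 z (fun z' => vnorm_dist z' z)) => eps /hz [z' [[? ?] ?]].
  by exists z'.
split => //; apply: Rnot_lt_le => hlt.
have [de [hde hde']] := locally_unif_continuousP d h hc R0 (c - h z) ltac:(lra).
have [z' [[nz' hz'] hzz]] := hz de hde.
by have := hde' z' z nz' nz hzz; split_Rabs; lra.
Qed.

Lemma superlevel_ball_convex d (h : vec d -> R) (R0 c : R) :
  quasiconcave_fun d h ->
  convex_set d (fun z => vnorm z <= R0 /\ c <= h z).
Proof.
move=> hqc z1 z2 t ht [n1 h1] [n2 h2]; split; last exact: hqc.
by apply: Rle_trans (vnormD_le _ _) _; rewrite !vnormZ !Rabs_right; nra.
Qed.

Definition joint_locally_unif_continuous d (K : vec d -> vec d -> R) :=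
  forall r, exists rho, modulus rho /\ forall p q x y, vnorm p <= r -> vnorm q <= r ->
    Rabs (K p x - K q y) <= rho (vnorm (vsub p q) + vnorm (vsub x y)).

Definition quasiconcave_in_p d (K : vec d -> vec d -> R) := forall y, quasiconcave_fun d (K^~ y).

Definition coercive d (K : vec d -> vec d -> R) :=
  forall M, exists r, forall p y, r <= vnorm p -> M <= Rabs (K p y).

Lemma joint_locally_unif_continuous_p d (K : vec d -> vec d -> R) y :
  joint_locally_unif_continuous d K -> locally_unif_continuous d (fun p => K p y).
Proof.
move=> hc r; have [rho [hm hr]] := hc r; exists rho; split => // p q hp hq.
by have := hr p q y y hp hq; rewrite vnormBxx Rplus_0_r.
Qed.

Section SuperlevelTransfer.
Variables (d : nat) (K : vec d -> vec d -> R).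
Hypotheses (K_cont : joint_locally_unif_continuous d K) (K_qc : quasiconcave_in_p d K).
Variables (u : vec d -> R) (x q : vec d) (c s : R).
Hypotheses (u_buc : bounded_unif_continuous u) (q_sup : superdiff u x q)
  (sub_ge : forall y z, vnorm (vsub y x) < s -> subdiff u y z -> c <= K z y) (hs : 0 < s).

Section Constants.
Variables (g M r R0 r1 s1 : R).
Hypotheses (hg : 0 < g) (hr : 0 < r) (hr1 : 0 < r1) (hs1 : 0 < s1) (hs1s : s1 <= s) (hMc : Rabs c < M)
  (hM0 : forall y, Rabs (K vzero y) < M) (r_coercive : forall p y, r <= vnorm p -> M <= Rabs (K p y))
  (hR0 : r + 2 * vnorm q + 1 <= R0)
  (x_osc : forall z y, vnorm z <= R0 -> vnorm (vsub y x) < s1 -> Rabs (K z y - K z x) < g / 2)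
  (q_gap : forall z, vnorm (vsub z q) < r1 -> K z x < c - g / 2).

Let C z := vnorm z <= R0 /\ c - g / 2 <= K z x.

Lemma near_superlevel_in_C y z : vnorm (vsub y x) < s1 -> c <= K z y -> vnorm z <= R0 -> C z.
Proof. by move=> hy hz nz; split => //; have := x_osc z y nz hy; split_Rabs; lra. Qed.

Lemma far_superlevel_dim1 y z : vnorm (vsub y x) < s1 -> c <= K z y -> r <= vnorm z ->
  d = 1%nat /\ exists z', C z' /\ vnorm z' <= r /\ c <= K z' y.
Proof.
move=> hy hz hzr.
have hM : 0 < M by have := Rabs_pos c; lra.
have hzM : M <= K z y by have := r_coercive z y hzr; split_Rabs; lra.
have hcont := joint_locally_unif_continuous_p d K y K_cont.
case: (ltngtP d 1) => hd.
- move: hd hzr; rewrite ltnS leqn0 => /eqP d0; subst d.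
  by rewrite /vnorm /dot big_ord0 sqrt_0; lra.
- have := far_below_superlevel (fun p => K p y) M r hcont hM (r_coercive ^~ y) hd (hM0 y) (K_qc y) z hzr.
  lra.
split => //; set z' := vscale (r / vnorm z) z.
have nz' : vnorm z' = r by rewrite /z' vnormZ Rabs_right; [field | apply/Rle_ge/Rle_mult_inv_pos]; lra.
have hz' : c <= K z' y.
  have := superlevel_radial (fun p => K p y) M r hcont hM (r_coercive ^~ y) z hr hzr hzM.
  by rewrite -/z'; have := Rle_abs c; lra.
exists z'; split; last by split => //; lra.
by apply: (near_superlevel_in_C y) => //; have := vnorm_ge0 q; lra.
Qed.

Section Separation.
Variables (e zs : vec d).
Hypotheses (he : dot e e = 1) (C_zs : C zs) (C_half : forall z, C z -> dot e zs <= dot e z)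
  (zs_closest : forall z, C z -> vnorm (vsub zs q) <= vnorm (vsub z q)).

(* In dimension one, points of the segment [z', z] just below the level dot e zs would lie in C. *)
Lemma slope_bound_dim1 y z z' : d = 1%nat -> vnorm (vsub y x) < s1 -> c <= K z y ->
  C z' -> vnorm z' <= r -> c <= K z' y -> dot e zs <= dot e z.
Proof.
move=> hd hy hz Cz' nz' hz'; apply: Rnot_lt_le => hlt; set al := dot e zs in hlt.
have hal' : al <= dot e z' := C_half z' Cz'.
set th := Rmin 1 ((al - dot e z) / 2).
have hth : 0 < th by apply: Rmin_glb_lt; lra.
have [hth1 hth2] : th <= 1 /\ th <= (al - dot e z) / 2 by split; [apply: Rmin_l | apply: Rmin_r].
set s0 := (dot e z' - (al - th)) / (dot e z' - dot e z).
have [hs0 hs0'] : 0 <= s0 /\ s0 <= 1.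
  rewrite /s0; split; first by apply: Rle_mult_inv_pos; lra.
  apply: (Rmult_le_reg_r (dot e z' - dot e z)); first lra.
  by rewrite (_ : _ / _ * _ = dot e z' - (al - th)); [lra | field; lra].
set m := vadd (vscale (1 - s0) z') (vscale (1 - (1 - s0)) z).
have dm : dot e m = al - th by rewrite /m dotDr !dotZr /s0; field; lra.
have Cm : C m.
  apply: (near_superlevel_in_C y) => //; first by apply: K_qc => //; lra.
  rewrite (vnorm_dim1 e m hd he) dm.
  have := dot_unit_le e he zs; have := vnorm_le_vnormB zs q.
  have := zs_closest z' Cz'; have := vnormB_le z' q.
  by rewrite -/al; split_Rabs; lra.
by have := C_half m Cm; rewrite -/al dm; lra.
Qed.

Lemma separated_slope_bound y z : vnorm (vsub y x) < s1 -> c <= K z y -> dot e zs <= dot e z.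
Proof.
move=> hy hz; case: (Rlt_le_dec (vnorm z) r) => hzr.
  by apply/C_half/(near_superlevel_in_C y) => //; have := vnorm_ge0 q; lra.
have [hd [z' [Cz' [nz' hz']]]] := far_superlevel_dim1 y z hy hz hzr.
exact: (slope_bound_dim1 y z z').
Qed.

End Separation.

Lemma C_empty : ~ exists z, C z.
Proof.
move=> hne.
have C_far z : C z -> r1 <= vnorm (vsub z q).
  by move=> [_ hz]; apply: Rnot_lt_le => /q_gap; lra.
have [zs [e [C_zs [he [hsep [C_half zs_closest]]]]]] := closest_point_separation d C q R0 r1 hne
  (fun z (hz : C z) => proj1 hz)
  (superlevel_ball_closed d _ R0 _ (joint_locally_unif_continuous_p d K x K_cont))
  (superlevel_ball_convex d _ R0 _ (K_qc x)) hr1 C_far.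
have := subdiff_slope_bound_superdiff d u x q e (dot e zs) s1 u_buc q_sup he hs1
  (fun y z hy hz => separated_slope_bound e zs he C_half zs_closest y z hy (sub_ge y z ltac:(lra) hz)).
lra.
Qed.

Lemma C_point_of_subdiff y z : vnorm (vsub y x) < s1 -> subdiff u y z -> exists z', C z'.
Proof.
move=> hy /(sub_ge y z ltac:(lra)) hz; case: (Rlt_le_dec (vnorm z) r) => hzr.
  by exists z; apply: (near_superlevel_in_C y) => //; have := vnorm_ge0 q; lra.
by have [_ [z' [Cz' _]]] := far_superlevel_dim1 y z hy hz hzr; exists z'.
Qed.

Lemma superlevel_transfer_absurd : False.
Proof.
have hd : (0 < d)%nat.
  rewrite lt0n; apply/eqP => d0.
  have : subdiff u x q.
    move=> eta _; exists 1; split => [|y [hy _]]; first lra.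
    by subst d; move: hy; rewrite /vnorm /dot big_ord0 sqrt_0; lra.
  move/(sub_ge x q ltac:(rewrite vnormBxx; lra)); have := q_gap q ltac:(rewrite vnormBxx; lra); lra.
set e := basis (Ordinal hd).
have he : dot e e = 1 by rewrite /e dot_basisl /basis eqxx.
have := subdiff_slope_bound_superdiff d u x q e (dot e q + 1) s1 u_buc q_sup he hs1
  (fun y z hy hz => False_ind _ (C_empty (C_point_of_subdiff y z hy hz))).
lra.
Qed.

End Constants.

Theorem superdiff_superlevel : coercive d K -> (exists C0, forall y, Rabs (K vzero y) <= C0) ->
  c <= K q x.
Proof.
move=> hcoer [C0 hC0]; apply: Rnot_lt_le => hq.
have [r0 hr0] := hcoer (Rmax C0 (Rabs c) + 1).
have [rho [hmod hrho]] := K_cont (Rmax r0 1 + 2 * vnorm q + 1).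
have [dr [hdr hdr']] := hmod ((c - K q x) / 2) ltac:(lra).
have rho_small a : 0 <= a < dr -> rho a < (c - K q x) / 2.
  by move=> [ha ha']; have := hdr' a ha ha'; split_Rabs; lra.
have [hM1 hM2] := conj (Rmax_l C0 (Rabs c)) (Rmax_r C0 (Rabs c)).
have [hr1 hr2] := conj (Rmax_l r0 1) (Rmax_r r0 1).
have hq0 := vnorm_ge0 q.
apply: (superlevel_transfer_absurd (c - K q x) (Rmax C0 (Rabs c) + 1) (Rmax r0 1)
  (Rmax r0 1 + 2 * vnorm q + 1) (Rmin dr 1) (Rmin dr s)); try lra.
- by apply: Rmin_glb_lt; lra.
- by apply: Rmin_glb_lt; lra.
- exact: Rmin_r.
- by move=> y; have := hC0 y; lra.
- by move=> p y hp; apply: hr0; lra.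
- move=> z y nz /(Rlt_le_trans _ _ _)/(_ (Rmin_l _ _)) hy.
  have := hrho z z y x nz nz; rewrite vnormBxx Rplus_0_l => h.
  by apply: Rle_lt_trans h _; apply: rho_small; have := vnorm_ge0 (vsub y x); lra.
- move=> z hz; have [hz1 hz2] := conj (Rmin_l dr 1) (Rmin_r dr 1).
  have nz : vnorm z <= Rmax r0 1 + 2 * vnorm q + 1 by have := vnorm_le_vnormB z q; lra.
  have := hrho z q x x nz ltac:(lra); rewrite vnormBxx Rplus_0_r => h.
  have := rho_small (vnorm (vsub z q)) ltac:(have := vnorm_ge0 (vsub z q); lra).
  by split_Rabs; lra.
Qed.

End SuperlevelTransfer.

(** * Almost sure coercivity and the main theorem *)

(* n decodes to a vector of rationals ((a_i - b_i) / (m + 1))_i. *)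
Definition dense_seq d (n : nat) : vec d :=
  match @unpickle ({ffun 'I_d -> nat * nat} * nat)%type n with
  | Some (f, m) => fun i => (INR (f i).1 - INR (f i).2) / INR m.+1
  | None => vzero
  end.

Lemma IZR_nat_parts (z : Z) : IZR z = INR (Z.to_nat z) - INR (Z.to_nat (- z)).
Proof. by rewrite !INR_IZR_INZ -minus_IZR; f_equal; lia. Qed.

Lemma dense_seq_dense d (p : vec d) eps : 0 < eps -> exists n, vnorm (vsub (dense_seq d n) p) < eps.
Proof.
move=> he; have [m hm] := nat_gt ((INR d + 1) / eps).
have hm1 : 0 < INR m.+1 by apply: lt_0_INR; lia.
pose z (i : 'I_d) := (up (p i * INR m.+1) - 1)%Z.
exists (pickle ([ffun i => (Z.to_nat (z i), Z.to_nat (- z i))], m)); rewrite /dense_seq pickleK.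
apply: Rle_lt_trans (vnorm_le_coord (1 / INR m.+1) _ _ _) _.
- by apply: Rlt_le; apply: Rdiv_lt_0_compat; lra.
- move=> i; rewrite /vsub ffunE /= -IZR_nat_parts /z minus_IZR.
  have [h1 h2] := archimed (p i * INR m.+1).
  rewrite (_ : (IZR (up (p i * INR m.+1)) - 1) / INR m.+1 - p i =
    (IZR (up (p i * INR m.+1)) - 1 - p i * INR m.+1) / INR m.+1); last by field; lra.
  rewrite /Rdiv Rabs_mult Rabs_inv (Rabs_right (INR m.+1)); last lra.
  by apply: Rmult_le_compat_r; [apply/Rlt_le/Rinv_0_lt_compat | split_Rabs]; lra.
- have := Rmult_lt_compat_l eps _ _ he hm.
  rewrite (_ : eps * ((INR d + 1) / eps) = INR d + 1); last by field; lra.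
  have := pos_INR d; have := pos_INR m; rewrite S_INR => hm0 hd h.
  apply: (Rmult_lt_reg_r (INR m + 1)); first lra.
  by rewrite (_ : (INR d + 1) * (1 / (INR m + 1)) * (INR m + 1) = INR d + 1); [nra | field; lra].
Qed.

Lemma coercive_of_dense d (K : vec d -> vec d -> R) : joint_locally_unif_continuous d K ->
  (forall M : nat, exists r, forall n y,
     r <= vnorm (dense_seq d n) -> INR M <= Rabs (K (dense_seq d n) y)) ->
  coercive d K.
Proof.
move=> hc hd M; have [M' hM'] := nat_gt (M + 1); have [r hr] := hd M'.
exists (r + 1) => p y hp.
have [rho [hmod hrho]] := hc (vnorm p + 1); have [de [hde hde']] := hmod 1 Rlt_0_1.
have [n hn] := dense_seq_dense d p (Rmin de 1) ltac:(by apply: Rmin_glb_lt; lra).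
have [hn1 hn2] := conj (Rlt_le_trans _ _ _ hn (Rmin_r _ _)) (Rlt_le_trans _ _ _ hn (Rmin_l _ _)).
have hpn := vnorm_dist (dense_seq d n) p.
have := hr n y ltac:(split_Rabs; lra).
have := hrho (dense_seq d n) p y y ltac:(split_Rabs; lra) ltac:(lra).
rewrite vnormBxx Rplus_0_r => h1; have := hde' _ (vnorm_ge0 _) hn2.
by have := Rle_abs (rho (vnorm (vsub (dense_seq d n) p))); split_Rabs; lra.
Qed.

Lemma coercive_almost_surely d Omega (F : (Omega -> Prop) -> Prop) P (H : vec d -> vec d -> Omega -> R) :
  probability F P -> hypA2 F P H -> hypA3 H ->
  almost_surely F P (fun w => coercive d (fun p y => H p y w)).
Proof.
move=> hP hA2 [hA3 _].
have hM (M : nat) : almost_surely F P (fun w => exists r, forall n y,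
    r <= vnorm (dense_seq d n) -> INR M <= Rabs (H (dense_seq d n) y w)).
  have [r hr] := hA2 (INR M).
  have hn n : almost_surely F P (fun w => r <= vnorm (dense_seq d n) ->
      forall y, INR M <= Rabs (H (dense_seq d n) y w)).
    case: (Rle_dec r (vnorm (dense_seq d n))) => h; first by apply: almost_surely_impl (hr _ h) _.
    exact: almost_surely_sure.
  apply: almost_surely_impl (almost_surely_forall_nat _ F P hP _ hn) _ => w hw.
  by exists r => n y /(hw n).
apply: almost_surely_impl (almost_surely_forall_nat _ F P hP _ hM) _ => w hw.
exact: coercive_of_dense (hA3 w) hw.
Qed.

Section Shift.
Variables (d : nat) (K : vec d -> vec d -> R) (p0 : vec d).
Let K0 p y := K (vadd p0 p) y.

Lemma joint_locally_unif_continuous_shift :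
  joint_locally_unif_continuous d K -> joint_locally_unif_continuous d K0.
Proof.
move=> hc r; have [rho [hm hr]] := hc (vnorm p0 + r); exists rho; split => // p q x y hp hq.
rewrite -(_ : vsub (vadd p0 p) (vadd p0 q) = vsub p q); last by vring.
by apply: hr; apply: Rle_trans (vnormD_le _ _) _; lra.
Qed.

Lemma quasiconcave_in_p_shift : quasiconcave_in_p d K -> quasiconcave_in_p d K0.
Proof.
move=> hqc y c p q t ht hp hq; rewrite /K0.
rewrite (_ : vadd _ _ = vadd (vscale t (vadd p0 p)) (vscale (1 - t) (vadd p0 q))); last by vring.
exact: hqc.
Qed.

Lemma coercive_shift : coercive d K -> coercive d K0.
Proof.
move=> hc M; have [r hr] := hc M; exists (r + vnorm p0) => p y hp; apply: hr.
have := vnorm_le_vnormB p (vscale (-1) p0); rewrite vnormZ Rabs_Ropp Rabs_R1.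
by rewrite (_ : vsub p (vscale (-1) p0) = vadd p0 p); [lra | vring].
Qed.

End Shift.

Lemma vnorm_scaled_ball_near d (Rr lam : R) (x y : vec d) : 0 < lam -> lam < 1 ->
  vnorm x < Rr / lam -> vnorm (vsub y x) < 1 -> vnorm y <= (Rr + 1) / lam.
Proof.
move=> hlam hlam1 hx hy; have := vnorm_le_vnormB y x.
rewrite (_ : (Rr + 1) / lam = Rr / lam + 1 / lam); last by field; lra.
have : 1 < 1 / lam.
  by apply: (Rmult_lt_reg_r lam) => //; rewrite (_ : 1 / lam * lam = 1); [lra | field; lra].
lra.
Qed.

Theorem mainTheorem9 (d : nat) (Omega : Type) (F : (Omega -> Prop) -> Prop)
  (P : (Omega -> Prop) -> R) (tau : vec d -> Omega -> Omega)
  (H : vec d -> vec d -> Omega -> R)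
  (v : R -> vec d -> vec d -> Omega -> R) (Hbar : vec d -> R) (p0 : vec d) :
  probability F P ->
  ergodic_group F P tau ->
  quasiconcave H -> hypA1 tau H -> hypA2 F P H -> hypA3 H ->
  is_vlam H v ->
  effective_hamiltonian F P v Hbar ->
  exists Omt : Omega -> Prop, F Omt /\ P Omt = 1 /\
    forall eps Rr w, 0 < eps < 1 -> 0 < Rr -> Omt w ->
      exists lam0, 0 < lam0 /\
        forall lam x q, 0 < lam -> lam < lam0 -> vnorm x < Rr / lam ->
          superdiff (fun y => v lam p0 y w) x q ->
          H (vadd p0 q) x w > Hbar p0 - eps.
Proof.
move=> hP _ hqc _ hA2 [hA3 hA3b] hv heff.
have [E [FE [PE hE]]] := almost_surely_and _ F P hP _ _ (heff p0)
  (coercive_almost_surely d _ F P H hP hA2 (conj hA3 hA3b)).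
exists E; do 2!split => //; move=> eps Rr w [he0 he1] hRr /hE [hom hcoer].
have [lam1 [hlam1 hlam]] := hom (Rr + 1) ltac:(lra) (eps / 2) ltac:(lra).
exists (Rmin lam1 1); split => [|lam x q hlam0 hlt hx hsup]; first by apply: Rmin_glb_lt; lra.
have [hlt1 hlt2] := conj (Rlt_le_trans _ _ _ hlt (Rmin_l _ _)) (Rlt_le_trans _ _ _ hlt (Rmin_r _ _)).
have [[_ [_ hsuper]] hbuc] := hv lam p0 w hlam0.
have [C0 hC0] := hA3b (vnorm p0).
set K := fun p y => H p y w.
suff : Hbar p0 - eps / 2 <= K (vadd p0 q) x by rewrite /K; lra.
apply: (superdiff_superlevel d (fun p y => K (vadd p0 p) y)
  (joint_locally_unif_continuous_shift d K p0 (hA3 w)) (quasiconcave_in_p_shift d K p0 (hqc^~ w))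
  _ x q _ 1 hbuc hsup); [|lra|exact: coercive_shift|].
- move=> y z hy /hsuper.
  have := hlam lam y hlam0 hlt1 (vnorm_scaled_ball_near d Rr lam x y hlam0 hlt2 hx hy).
  by rewrite /K; split_Rabs; lra.
- by exists C0 => y; apply: hC0; rewrite (_ : vadd p0 vzero = p0); [lra | vring].
Qed.
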